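(* Assume the setting in the context. Let $x_i,x_j,x_k\in X$ be distinct, and assume $x_k$ is neither a parent of $x_i$ nor a parent of $x_j$. If there exist $G_1,G_2\in\mathcal G$, $M\subseteq X\setminus\{x_i,x_k\}$ and $N\subseteq X\setminus\{x_i,x_j\}$ with $x_i-G_1(M\cup\{x_k\})\perp\!\!\!\perp x_j-G_2(N)$, then there exist $G_1',G_2'\in\mathcal G$, $M'\subseteq X\setminus\{x_i,x_k\}$ and $N'\subseteq X\setminus\{x_i,x_j\}$ with $x_i-G_1'(M')\perp\!\!\!\perp x_j-G_2'(N')$.
   Context: Model: $X$ is a finite set of observed random variables and $U$ a finite set of unobserved random variables; $V=X\cup U$ and $G=(V,E)$ is a DAG on $V$. Each $v_i\in V$ satisfies $v_i=\sum_{x_j\in \mathrm{pa}(v_i)\cap X} f^{(i)}_j(x_j)+\sum_{u_k\in\mathrm{pa}(v_i)\cap U} f^{(i)}_k(u_k)+n_i$, where the $f$'s are nonlinear functions and the external noises $n_i$ are jointly independent. ''Parent'', ''ancestor'', ''path'', ''d-separation'' refer to $G$ (a path has distinct vertices). Causal Faithfulness Condition (CFC): any conditional independence among variables of $V$ that is not entailed by d-separation in $G$ does not hold. $\perp\!\!\!\perp$ denotes statistical independence, $\not\perp\!\!\!\perp$ dependence. Function class: $\mathcal G$ is a class of generalized additive functions: for $G\in\mathcal G$ and a set $M$ of observed variables, $G(M)=\sum_{x_m\in M} g_m(x_m)$ (with $G(\emptyset)=0$). It satisfies: for any $x_i,x_j\in X$, sets $M,N\subseteq X$, $G_1,G_2\in\mathcal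 G$ and external noise $n_k$, if $n_k\not\perp\!\!\!\perp x_i-G_1(M)$ and $n_k\not\perp\!\!\!\perp x_j-G_2(N)$ then $x_i-G_1(M)\not\perp\!\!\!\perp x_j-G_2(N)$. Definitions, for $X'\subseteq X$ and $x_i,x_j\in X'$: an unobserved causal path (UCP) from $x_i$ to $x_j$ w.r.t. $X'$ is a directed path $x_i\to\cdots\to v_k\to x_j$ in $G$ with $v_k\notin X'$; an unobserved backdoor path (UBP) between $x_i$ and $x_j$ w.r.t. $X'$ is a path $x_i\leftarrow v_k\leftarrow\cdots\leftarrow v\to\cdots\to v_l\to x_j$ with $v_k,v_l\notin X'$ (allowing $v=v_k$, $v=v_l$, or $v=v_k=v_l$; $v$ may be in $X'$). ''UBP/UCP between $x_i$ and $x_j$'' means a UBP or a UCP in either direction. $x_j$ is a visible parent of $x_i$ w.r.t. $X'$ if $x_j$ is a parent of $x_i$ and there is no UBP/UCP between them w.r.t. $X'$; $(x_i,x_j)$ is a visible non-edge w.r.t. $X'$ if there is no edge between them and no UBP/UCP between them w.r.t. $X'$; $(x_i,x_j)$ is invisible w.r.t. $X'$ if there is a UBP/UCP between them w.r.t. $X'$. When $X'$ is omitted, $X'=X$. Standing facts (taken as known), for $X'\subseteq X$ and distinct $x_i,x_j\in X'$: (F1) $x_j$ is a visible parent of $x_i$ w.r.t. $X'$ iff [for all $G_1,G_2\in\mathcal G$, $M\subseteq X'\setminus\{x_i,x_j\}$, $N\subseteq X'\setminus\{x_j\}$: $x_i-G_1(M)\not\perp\!\!\!\perp x_j-G_2(N)$]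 and [there exist $G_1,G_2\in\mathcal G$, $M\subseteq X'\setminus\{x_i\}$, $N\subseteq X'\setminus\{x_i,x_j\}$ with $x_i-G_1(M)\perp\!\!\!\perp x_j-G_2(N)$]. (F2) $(x_i,x_j)$ is a visible non-edge w.r.t. $X'$ iff there exist $G_1,G_2\in\mathcal G$ and $M,N\subseteq X'\setminus\{x_i,x_j\}$ with $x_i-G_1(M)\perp\!\!\!\perp x_j-G_2(N)$. (F3) $(x_i,x_j)$ is invisible w.r.t. $X'$ iff for all $M\subseteq X'\setminus\{x_i\}$, $N\subseteq X'\setminus\{x_j\}$, $G_1,G_2\in\mathcal G$: $x_i-G_1(M)\not\perp\!\!\!\perp x_j-G_2(N)$. *)

From HB Require Import structures.
From mathcomp Require Import all_boot all_order all_algebra.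
From mathcomp Require Import all_classical all_reals all_analysis.
Set Implicit Arguments. Unset Strict Implicit. Unset Printing Implicit Defensive.
Import Order.TTheory GRing.Theory Num.Theory.
Local Open Scope classical_set_scope.
Local Open Scope ring_scope.

Section Defs.
Variables (R : realType) (d : measure_display) (T : measurableType d).
Variable (V : finType).

(* ---------- graph notions (G = (V, E), E u v means u -> v) ---------- *)

Definition acyclic (E : rel V) : Prop :=
  forall (v : V) (s : seq V), ~ path E v (rcons s v).

(* unobserved causal path from a to b w.r.t. X' :
   a -> ... -> v -> b, distinct vertices, v \notin X' *)
Definition UCP (E : rel V) (X' : {set V}) (a b : V) : Prop :=
  exists s : seq V,
    [/\ path E a (rcons s b), uniq (a :: rcons s b) & last a s \notin X'].

(* unobserved backdoor path between a and b w.r.t. X' :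
   a <- vk <- ... <- v -> ... -> vl -> b, distinct vertices,
   vk, vl \notin X' (v = vk and/or v = vl allowed, v may be in X') *)
Definition UBP (E : rel V) (X' : {set V}) (a b : V) : Prop :=
  exists (v : V) (s1 s2 : seq V),
    [/\ path E v (rcons s1 a), path E v (rcons s2 b),
        uniq (v :: rcons s1 a ++ rcons s2 b),
        last v s1 \notin X' & last v s2 \notin X'].

Definition invisible (E : rel V) (X' : {set V}) (a b : V) : Prop :=
  [\/ UBP E X' a b, UCP E X' a b | UCP E X' b a].

Definition visible_parent (E : rel V) (X' : {set V}) (a b : V) : Prop :=
  E b a /\ ~ invisible E X' a b.

Definition visible_nonedge (E : rel V) (X' : {set V}) (a b : V) : Prop :=
  [/\ ~~ E a b, ~~ E b a & ~ invisible E X' a b].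

Definition indep (P : probability T R) (Y Z : T -> R) : Prop :=
  forall A B : set R, measurable A -> measurable B ->
    P (Y @^-1` A `&` Z @^-1` B) = (P (Y @^-1` A) * P (Z @^-1` B))%E.

Definition mutually_indep (P : probability T R) (n : V -> T -> R) : Prop :=
  forall (S : {set V}) (A : V -> set R), (forall v, measurable (A v)) ->
    P (\big[setI/setT]_(v in S) (n v @^-1` A v)) =
    \big[*%E/1%E]_(v in S) P (n v @^-1` A v).

(* structural equations: v = sum_{u parent of v} f v u (u) + n_v
   (observed and unobserved parents together) *)
Definition SEM (E : rel V) (x n : V -> T -> R) (f : V -> V -> R -> R) : Prop :=
  forall (v : V) (w : T), x v w = \sum_(u in V | E u v) f v u (x u w) + n v w.

(* an element of the function class is a family g = (g_m)_m;
   G(M) = sum_{m in M} g_m(x_m); residual x_i - G(M) *)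
Definition resid (x : V -> T -> R) (g : V -> R -> R) (M : {set V}) (i : V)
  : T -> R := fun w => x i w - \sum_(m in M) g m (x m w).

Definition class_property (P : probability T R) (X : {set V})
  (x n : V -> T -> R) (GG : (V -> R -> R) -> Prop) : Prop :=
  forall (i j k : V) (M N : {set V}) (G1 G2 : V -> R -> R),
    i \in X -> j \in X -> M \subset X -> N \subset X -> GG G1 -> GG G2 ->
    ~ indep P (n k) (resid x G1 M i) -> ~ indep P (n k) (resid x G2 N j) ->
    ~ indep P (resid x G1 M i) (resid x G2 N j).

Definition fact_F1 (P : probability T R) (X : {set V}) (E : rel V)
  (x : V -> T -> R) (GG : (V -> R -> R) -> Prop) : Prop :=
  forall (X' : {set V}) (i j : V), X' \subset X -> i \in X' -> j \in X' ->
  i != j ->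
  (visible_parent E X' i j <->
    (forall (G1 G2 : V -> R -> R) (M N : {set V}), GG G1 -> GG G2 ->
       M \subset X' :\: [set i; j] -> N \subset X' :\ j ->
       ~ indep P (resid x G1 M i) (resid x G2 N j)) /\
    (exists (G1 G2 : V -> R -> R) (M N : {set V}),
       [/\ GG G1, GG G2, M \subset X' :\ i, N \subset X' :\: [set i; j] &
           indep P (resid x G1 M i) (resid x G2 N j)])).

Definition fact_F2 (P : probability T R) (X : {set V}) (E : rel V)
  (x : V -> T -> R) (GG : (V -> R -> R) -> Prop) : Prop :=
  forall (X' : {set V}) (i j : V), X' \subset X -> i \in X' -> j \in X' ->
  i != j ->
  (visible_nonedge E X' i j <->
    exists (G1 G2 : V -> R -> R) (M N : {set V}),
       [/\ GG G1, GG G2, M \subset X' :\: [set i; j],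
           N \subset X' :\: [set i; j] &
           indep P (resid x G1 M i) (resid x G2 N j)]).

Definition fact_F3 (P : probability T R) (X : {set V}) (E : rel V)
  (x : V -> T -> R) (GG : (V -> R -> R) -> Prop) : Prop :=
  forall (X' : {set V}) (i j : V), X' \subset X -> i \in X' -> j \in X' ->
  i != j ->
  (invisible E X' i j <->
    forall (G1 G2 : V -> R -> R) (M N : {set V}), GG G1 -> GG G2 ->
       M \subset X' :\ i -> N \subset X' :\ j ->
       ~ indep P (resid x G1 M i) (resid x G2 N j)).

End Defs.

From HB Require Import structures.
From mathcomp Require Import all_boot all_order all_algebra.
From mathcomp Require Import all_classical all_reals all_analysis.
Import Order.TTheory GRing.Theory Num.Theory.
Local Open Scope classical_set_scope.
Local Open Scope ring_scope.

(* Read through F3, the given independence says that (x_i, x_j) is not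
   invisible w.r.t. X, and through F1 that x_i is not a parent of x_j.
   Dropping x_k from the observed set keeps the pair visible: a UBP/UCP
   w.r.t. X \ {x_k} is one w.r.t. X unless its last vertex before x_i or x_j
   is x_k, which is not a parent of either.  So w.r.t. X \ {x_k} the pair is
   a visible non-edge or x_j is a visible parent of x_i, and F2 resp. F1
   provide an independence whose conditioning sets avoid x_k. *)

Lemma indep_sym {R : realType} {d : measure_display} {T : measurableType d}
  {P : probability T R} {Y Z : T -> R} : indep P Y Z -> indep P Z Y.
Proof. by move=> YZ A B mA mB; rewrite setIC muleC; apply: YZ. Qed.

Section HiddenVertexRemoval.
Set Implicit Arguments.
Variables (V : finType) (E : rel V) (X : {set V}) (k : V).

Lemma last_notin_setD1_nonparent (v b : V) (s : seq V) :
  path E v (rcons s b) -> ~~ E k b -> last v s \notin X :\ k ->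
  last v s \notin X.
Proof.
rewrite rcons_path => /andP[_ Elb] nEkb; rewrite in_setD1 negb_and negbK.
by case/orP => [/eqP lk | //]; rewrite -lk Elb in nEkb.
Qed.

Lemma UCP_setD1_nonparent (a b : V) :
  ~~ E k b -> UCP E (X :\ k) a b -> UCP E X a b.
Proof.
move=> nEkb [s [p u l]]; exists s; split => //.
exact: last_notin_setD1_nonparent p nEkb l.
Qed.

Lemma UBP_setD1_nonparent (a b : V) :
  ~~ E k a -> ~~ E k b -> UBP E (X :\ k) a b -> UBP E X a b.
Proof.
move=> nEka nEkb [v [s1 [s2 [p1 p2 u l1 l2]]]]; exists v, s1, s2; split => //.
- exact: last_notin_setD1_nonparent p1 nEka l1.
- exact: last_notin_setD1_nonparent p2 nEkb l2.
Qed.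

Lemma invisible_setD1_nonparent (a b : V) :
  ~~ E k a -> ~~ E k b -> invisible E (X :\ k) a b -> invisible E X a b.
Proof.
move=> nEka nEkb [ubp | ucp | ucp].
- by apply: Or31; apply: UBP_setD1_nonparent.
- by apply: Or32; apply: UCP_setD1_nonparent.
- by apply: Or33; apply: UCP_setD1_nonparent.
Qed.

End HiddenVertexRemoval.

Lemma setD1D1C (V : finType) (X : {set V}) (a b : V) :
  X :\ b :\ a = X :\: [set a; b].
Proof. by rewrite finset.setDDl finset.setUC. Qed.

Lemma setD2_subset_setD1 (V : finType) (X : {set V}) (a b : V) :
  X :\: [set a; b] \subset X :\ a.
Proof. by apply: finset.setDS; rewrite finset.sub1set finset.set21. Qed.

Lemma setD1U1_subset (V : finType) (X M : {set V}) (a b : V) :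
  b \in X -> a != b -> M \subset X :\: [set a; b] -> b |: M \subset X :\ a.
Proof.
move=> bX ab sM; rewrite finset.subUset finset.sub1set !inE eq_sym ab bX /=.
apply: fintype.subset_trans sM _; exact: setD2_subset_setD1.
Qed.

Section ResidualIndependence.
Set Implicit Arguments.
Variables (R : realType) (d : measure_display) (T : measurableType d).
Variables (P : probability T R) (V : finType) (X : {set V}) (E : rel V).
Variables (x : V -> T -> R) (GG : (V -> R -> R) -> Prop).
Hypotheses (HF1 : fact_F1 P X E x GG) (HF2 : fact_F2 P X E x GG).
Hypothesis HF3 : fact_F3 P X E x GG.

Lemma indep_resid_not_invisible (a b : V) (Ga Gb : V -> R -> R)
    (Ma Nb : {set V}) :
  a \in X -> b \in X -> a != b -> GG Ga -> GG Gb ->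
  Ma \subset X :\ a -> Nb \subset X :\ b ->
  indep P (resid x Ga Ma a) (resid x Gb Nb b) -> ~ invisible E X a b.
Proof.
move=> aX bX ab gGa gGb sMa sNb indepab.
by move/(HF3 (subxx X) aX bX ab) => dependent; apply: dependent indepab.
Qed.

Lemma indep_resid_not_parent (a b : V) (Ga Gb : V -> R -> R)
    (Ma Nb : {set V}) :
  a \in X -> b \in X -> a != b -> GG Ga -> GG Gb ->
  Ma \subset X :\ a -> Nb \subset X :\: [set a; b] ->
  indep P (resid x Ga Ma a) (resid x Gb Nb b) -> ~~ E a b.
Proof.
move=> aX bX ab gGa gGb sMa sNb indepab; apply/negP => Eab.
have sNb' : Nb \subset X :\ b.
  by apply: fintype.subset_trans sNb _; rewrite finset.setUC setD2_subset_setD1.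
have ba : b != a by rewrite eq_sym.
have visible : visible_parent E X b a.
  split=> //; apply: indep_resid_not_invisible bX aX ba gGb gGa sNb' sMa _.
  exact: indep_sym.
have [dependent _] := proj1 (HF1 (subxx X) bX aX ba) visible.
by apply: dependent gGb gGa _ sMa (indep_sym indepab); rewrite finset.setUC.
Qed.

Lemma exists_indep_resid_of_not_invisible (X' : {set V}) (a b : V) :
  X' \subset X -> a \in X' -> b \in X' -> a != b ->
  ~~ E a b -> ~ invisible E X' a b ->
  exists (Ga Gb : V -> R -> R) (Ma Nb : {set V}),
    [/\ GG Ga, GG Gb, Ma \subset X' :\ a, Nb \subset X' :\: [set a; b] &
        indep P (resid x Ga Ma a) (resid x Gb Nb b)].
Proof.
move=> sX' aX' bX' ab nEab not_invisible.
have [Eba | nEba] := boolP (E b a).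
  by have [_ witness] := proj1 (HF1 sX' aX' bX' ab) (conj Eba not_invisible).
have [Ga [Gb [Ma [Nb [gGa gGb sMa sNb indepab]]]]] :=
  proj1 (HF2 sX' aX' bX' ab) (And3 nEab nEba not_invisible).
exists Ga, Gb, Ma, Nb; split=> //.
exact: fintype.subset_trans sMa (setD2_subset_setD1 X' a b).
Qed.

End ResidualIndependence.

Theorem proposition2
  (R : realType) (d : measure_display) (T : measurableType d)
  (P : probability T R) (V : finType) (X : {set V}) (E : rel V)
  (x n : V -> T -> R) (f : V -> V -> R -> R) (GG : (V -> R -> R) -> Prop)
  (Hdag : acyclic E)
  (Hf : forall v u, measurable_fun setT (f v u))
  (Hn : forall v, measurable_fun setT (n v))
  (Hsem : SEM E x n f)
  (Hnoise : mutually_indep P n)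
  (HGG : forall g, GG g -> forall m, measurable_fun setT (g m))
  (Hclass : class_property P X x n GG)
  (HF1 : fact_F1 P X E x GG) (HF2 : fact_F2 P X E x GG)
  (HF3 : fact_F3 P X E x GG)
  (i j k : V) (Hi : i \in X) (Hj : j \in X) (Hk : k \in X)
  (Hij : i != j) (Hik : i != k) (Hjk : j != k)
  (Hki : ~~ E k i) (Hkj : ~~ E k j) :
  (exists (G1 G2 : V -> R -> R) (M N : {set V}),
     [/\ GG G1, GG G2, M \subset X :\: [set i; k],
         N \subset X :\: [set i; j] &
         indep P (resid x G1 (k |: M) i) (resid x G2 N j)]) ->
  exists (G1' G2' : V -> R -> R) (M' N' : {set V}),
     [/\ GG G1', GG G2', M' \subset X :\: [set i; k],
         N' \subset X :\: [set i; j] &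
         indep P (resid x G1' M' i) (resid x G2' N' j)].
Proof.
case=> G1 [G2 [M [N [gG1 gG2 sM sN indep12]]]].
have sKM : k |: M \subset X :\ i by apply: setD1U1_subset.
have sNj : N \subset X :\ j.
  by apply: fintype.subset_trans sN _; rewrite finset.setUC setD2_subset_setD1.
have nEij : ~~ E i j by apply: (indep_resid_not_parent HF1 HF3) indep12.
have not_invisible_Xk : ~ invisible E (X :\ k) i j.
  move/(invisible_setD1_nonparent Hki Hkj).
  exact: (indep_resid_not_invisible HF3) indep12.
have iXk : i \in X :\ k by rewrite in_setD1 Hik.
have jXk : j \in X :\ k by rewrite in_setD1 Hjk.
have [G1' [G2' [M' [N' [gG1' gG2' sM' sN' indep']]]]] :=
  exists_indep_resid_of_not_invisible HF1 HF2 (finset.subD1set X k)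
    iXk jXk Hij nEij not_invisible_Xk.
exists G1', G2', M', N'; split=> //; first by rewrite -setD1D1C.
by apply: fintype.subset_trans sN' _; apply/finset.setSD/finset.subD1set.
Qed.
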